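(* Let $G$ be a finitely generated group of exponential growth with finite generating set $A$, $S=A\cup A^{-1}$, and let $\psi:L\to G$, $L\subseteq S^*$, be a Cayley automatic representation of $G$. Then there exist constants $\lambda_1,\lambda_2>0$ such that, with $B_n=\{g\in G: d_A(g)\le n\}$ and $Q_n=\{g\in B_n : \lambda_1 d_A(g)\le|\psi^{-1}(g)|\le\lambda_2 d_A(g)\}$, one has $\lim_{n\to\infty}\#Q_n/\#B_n=1$. Moreover, for every $g\in Q_n$, writing $w=\psi^{-1}(g)$, $d_A(\pi(w),\psi(w))\le(1+1/\lambda_1)|w|$.
   Context: $\pi:S^*\to G$ is the evaluation map and $d_A$ the word metric of $\Gamma(G,A)$, $d_A(g)=d_A(e,g)$. Exponential growth means there is $\lambda>1$ with $\#B_n\ge\lambda^n$ for all large $n$. A Cayley automatic representation is a bijection $\psi:L\to G$ from a regular $L\subseteq S^*$ such that for each $a\in A$ the relation $\{(\psi^{-1}(g),\psi^{-1}(ga)) : g\in G\}$ is FA-recognizable (the language of convolutions — parallel readings of the two strings with the shorter padded by a new symbol — is regular). *)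

From Stdlib Require Import Reals.
From HB Require Import structures.
From mathcomp Require Import all_boot.

Set Implicit Arguments.
Unset Strict Implicit.
Unset Printing Implicit Defensive.

Record is_group (G : Type) (mul : G -> G -> G) (inv : G -> G) (one : G) : Prop := {
  grp_assoc : forall x y z, mul x (mul y z) = mul (mul x y) z;
  grp_mul1 : forall x, mul one x = x;
  grp_mulV : forall x, mul (inv x) x = one
}.

Section Cayley.
Variables (G : choiceType) (mul : G -> G -> G) (inv : G -> G) (one : G).
Variable A : seq G.

Definition Salph : seq G := A ++ map inv A.
Definition S : finType := seq_sub Salph.

Definition evalw (w : seq S) : G := foldr (fun s g => mul (val s) g) one w.

Definition words_eq (k : nat) : seq (seq S) := [seq tval t | t <- enum {: k.-tuple S}].
Definition words_le (n : nat) : seq (seq S) := flatten [seq words_eq k | k <- iota 0 n.+1].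

Definition ball (n : nat) : seq G := undup [seq evalw w | w <- words_le n].

Definition generates : Prop := forall g : G, exists n, g \in ball n.

Definition dA (gen : generates) (g : G) : nat := ex_minn (gen g).
Definition wdist (gen : generates) (g h : G) : nat := dA gen (mul (inv g) h).

Definition exp_growth : Prop :=
  exists lam : R, Rlt 1 lam /\ exists N, forall n, (N <= n)%N ->
     Rle (pow lam n) (INR (size (ball n))).

End Cayley.

Record dfa (Sig : finType) := DFA {
  dfa_state : finType;
  dfa_start : dfa_state;
  dfa_final : pred dfa_state;
  dfa_trans : dfa_state -> Sig -> dfa_state
}.

Definition dfa_accepts (Sig : finType) (M : dfa Sig) (w : seq Sig) : bool :=
  @dfa_final Sig M (foldl (@dfa_trans Sig M) (@dfa_start Sig M) w).

Definition regular (Sig : finType) (L : pred (seq Sig)) : Prop :=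
  exists M : dfa Sig, forall w, dfa_accepts M w = L w.

(* Convolution of two words: parallel reading, shorter padded with a new
   symbol (None). *)
Definition pad (T : Type) (n : nat) (u : seq T) : seq (option T) :=
  map Some u ++ nseq (n - size u) None.

Definition conv (T : Type) (u v : seq T) : seq (option T * option T) :=
  let n := maxn (size u) (size v) in zip (pad n u) (pad n v).

Definition fa_recognizable (T : finType) (Rel : seq T -> seq T -> Prop) : Prop :=
  exists M : dfa (option T * option T)%type,
    forall x, dfa_accepts M x <-> exists u v, x = conv u v /\ Rel u v.

Definition cayley_automatic (G : choiceType) (mul : G -> G -> G) (inv : G -> G)
    (A : seq G) (L : pred (seq (S inv A))) (psi : seq (S inv A) -> G)
    (psiinv : G -> seq (S inv A)) : Prop :=
  [/\ regular L,
      (forall g, L (psiinv g) /\ psi (psiinv g) = g),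
      (forall w, L w -> psiinv (psi w) = w) &
      (forall a, a \in A ->
         fa_recognizable (fun u v => exists g, u = psiinv g /\ v = psiinv (mul g a)))].

Definition Rleb (x y : R) : bool := if Rle_dec x y then true else false.

Definition Qset (G : choiceType) (mul : G -> G -> G) (inv : G -> G) (one : G)
    (A : seq G) (gen : generates mul inv one A) (psiinv : G -> seq (S inv A))
    (l1 l2 : R) (n : nat) : seq G :=
  [seq g <- ball mul inv one A n |
     Rleb (l1 * INR (dA gen g)) (INR (size (psiinv g))) &&
     Rleb (INR (size (psiinv g))) (l2 * INR (dA gen g))].

From Stdlib Require Import Reals Lra.
From HB Require Import structures.
From mathcomp Require Import all_boot zify.

(* Cayley automaticity bounds how much |psi^-1(g)| can change under right
   multiplication by a generator: otherwise the automaton recognising that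
   multiplication could be pumped on the padded tail of a convolution, producing a
   second image of the same word.  Hence |psi^-1(g)| <= K d_A(g), which gives l2.
   Conversely psi^-1 is injective, so at most (#S+1)^((n-1)/M) elements of B_n
   have a representative shorter than d_A(g)/M; once lam^M >= 2(#S+1), exponential
   growth makes them a vanishing fraction of B_n, which gives l1 = 1/M.  The
   distance bound is the triangle inequality d_A(pi(w), g) <= |w| + d_A(g). *)

Set Implicit Arguments.
Unset Strict Implicit.

Section GroupLaws.
Variables (T : Type) (mul : T -> T -> T) (inv : T -> T) (one : T).
Hypothesis HG : is_group mul inv one.

Lemma grp_mulgV x : mul x (inv x) = one.
Proof.
case: HG => mulA mul1g mulVg.
by rewrite -[mul x _]mul1g -(mulVg (inv x)) -mulA (mulA (inv x) x) mulVg mul1g.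
Qed.

Lemma grp_mulg1 x : mul x one = x.
Proof. by case: HG => mulA mul1g mulVg; rewrite -(mulVg x) mulA grp_mulgV mul1g. Qed.

Lemma grp_invgK x : inv (inv x) = x.
Proof.
case: HG => mulA mul1g mulVg.
by rewrite -[inv (inv x)]grp_mulg1 -(mulVg x) mulA mulVg mul1g.
Qed.

Lemma grp_mulIg a : injective (mul^~ a).
Proof.
move=> x y /= Exy; case: HG => mulA _ _.
by rewrite -(grp_mulg1 x) -(grp_mulg1 y) -(grp_mulgV a) !mulA Exy.
Qed.

End GroupLaws.

Section WordMetric.
Variables (G : choiceType) (mul : G -> G -> G) (inv : G -> G) (one : G) (A : seq G).
Hypothesis HG : is_group mul inv one.
Local Notation word := (seq (S inv A)).
Local Notation eval := (evalw mul one).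

Lemma mem_words_eq k (w : word) : (w \in words_eq inv A k) = (size w == k).
Proof.
apply/mapP/eqP => [[t _ ->]|Hw]; first exact: size_tuple.
by exists (tcast Hw (in_tuple w)); rewrite ?mem_enum ?val_tcast.
Qed.

Lemma mem_words_le n (w : word) : (w \in words_le inv A n) = (size w <= n).
Proof.
apply/flatten_mapP/idP => [[k]|Hw].
  by rewrite mem_iota mem_words_eq ltnS => /andP[_ Hk] /eqP->.
by exists (size w); rewrite ?mem_iota ?mem_words_eq //= ltnS.
Qed.

Lemma mem_ball n g :
  reflect (exists2 w : word, size w <= n & eval w = g) (g \in ball mul inv one A n).
Proof.
rewrite mem_undup; apply: (iffP mapP) => [[w Hw ->]|[w Hw <-]].
  by exists w; rewrite -?mem_words_le.
by exists w; rewrite ?mem_words_le.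
Qed.

Lemma evalw_cat (u v : word) : eval (u ++ v) = mul (eval u) (eval v).
Proof.
case: HG => mulA mul1g _.
by elim: u => [|s u IH] /=; rewrite ?mul1g // IH mulA.
Qed.

Lemma evalw_rcons (w : word) s : eval (rcons w s) = mul (eval w) (val s).
Proof. by rewrite -cats1 evalw_cat /= (grp_mulg1 HG). Qed.

Lemma inv_in_Salph (s : S inv A) : inv (val s) \in Salph inv A.
Proof.
have := valP s; rewrite /Salph !mem_cat => /orP[Ha|/mapP[a Ha ->]].
  by rewrite map_f ?orbT.
by rewrite (grp_invgK HG) Ha.
Qed.

Definition sinv (s : S inv A) : S inv A := insubd s (inv (val s)).

Lemma val_sinv s : val (sinv s) = inv (val s).
Proof. exact/insubdK/inv_in_Salph. Qed.

Lemma evalw_rev_sinv (w : word) : eval (rev (map sinv w)) = inv (eval w).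
Proof.
case: (HG) => mulA mul1g mulVg.
elim: w => [|s w IH]; first by rewrite /= -[inv one]mul1g (grp_mulgV HG).
apply: (grp_mulIg HG (a := eval (s :: w))) => /=.
rewrite mulVg rev_cons evalw_rcons IH val_sinv -mulA (mulA (inv (val s))) mulVg.
by rewrite mul1g mulVg.
Qed.

Variable gen : generates mul inv one A.
Local Notation dA := (dA gen).

Lemma dA_spec g : exists2 w : word, size w <= dA g & eval w = g.
Proof. by rewrite /dA; case: ex_minnP => m /mem_ball. Qed.

Lemma dA_evalw (w : word) : dA (eval w) <= size w.
Proof. by rewrite /dA; case: ex_minnP => m _; apply; apply/mem_ball; exists w. Qed.

Lemma mem_ball_dA n g : (g \in ball mul inv one A n) = (dA g <= n).
Proof.
apply/mem_ball/idP => [[w Hw <-]|Hg]; first exact: leq_trans (dA_evalw w) Hw.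
by have [w Hw Ew] := dA_spec g; exists w; first exact: leq_trans Hg.
Qed.

Lemma dA_eq0 g : dA g = 0 -> g = one.
Proof. by move=> Hg; have [w] := dA_spec g; rewrite Hg leqn0 => /nilP-> <-. Qed.

Lemma dA_mul x y : dA (mul x y) <= dA x + dA y.
Proof.
have [u Hu Eu] := dA_spec x; have [v Hv Ev] := dA_spec y.
rewrite -{1}Eu -{1}Ev -evalw_cat; apply: leq_trans (dA_evalw _) _.
by rewrite size_cat; apply: leq_add.
Qed.

Lemma dA_inv x : dA (inv x) <= dA x.
Proof.
have [w Hw Ew] := dA_spec x; rewrite -{1}Ew -evalw_rev_sinv.
by apply: leq_trans (dA_evalw _) _; rewrite size_rev size_map.
Qed.

Lemma wdist_evalw_le (w : word) g : wdist gen (eval w) g <= size w + dA g.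
Proof.
apply: leq_trans (dA_mul _ _) _; rewrite leq_add2r.
exact: leq_trans (dA_inv _) (dA_evalw w).
Qed.

End WordMetric.

Section Convolution.
Variable T : Type.

Definition pair_swap (p : option T * option T) := (p.2, p.1).

Lemma pair_swapK : involutive pair_swap.
Proof. by case. Qed.

Lemma conv_swap (u v : seq T) : conv u v = map pair_swap (conv v u).
Proof.
rewrite /conv maxnC; elim: (pad _ v) (pad _ u) => [|x a IH] [|y b] //=.
by rewrite IH.
Qed.

Lemma conv_split (u v : seq T) : size u <= size v ->
  conv u v = zip (map Some u) (map Some (take (size u) v))
             ++ map (fun b => (None, Some b)) (drop (size u) v).
Proof.
move=> Huv; rewrite /conv /pad (maxn_idPr Huv) subnn cats0.
rewrite -{2}(cat_take_drop (size u) v) map_cat zip_cat; last first.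
  by rewrite !size_map size_takel.
by rewrite -size_drop; congr (_ ++ _); elim: (drop _ v) => //= b r ->.
Qed.

Lemma pmap_pad n (u : seq T) : pmap id (pad n u) = u.
Proof.
rewrite /pad pmap_cat (_ : pmap id (nseq _ None) = [::]) ?cats0.
  exact: (map_pK (g := Some)).
by elim: (n - size u).
Qed.

Lemma size_pad n (u : seq T) : size u <= n -> size (pad n u) = n.
Proof. by move=> Hu; rewrite /pad size_cat size_map size_nseq subnKC. Qed.

Lemma conv_inj (u v u' v' : seq T) : conv u v = conv u' v' -> u = u' /\ v = v'.
Proof.
have E1 (a b : seq T) : pmap id (unzip1 (conv a b)) = a.
  by rewrite /conv unzip1_zip ?pmap_pad // !size_pad ?leq_maxl ?leq_maxr.
have E2 (a b : seq T) : pmap id (unzip2 (conv a b)) = b.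
  by rewrite /conv unzip2_zip ?pmap_pad // !size_pad ?leq_maxl ?leq_maxr.
by move=> E; split; [rewrite -(E1 u v) E E1 | rewrite -(E2 u v) E E2].
Qed.

End Convolution.

Lemma dfa_pump (Sig : finType) (M : dfa Sig) (p t : seq Sig) :
  dfa_accepts M (p ++ t) -> #|dfa_state M| < size t ->
  exists i j, [/\ i < j, j <= size t & dfa_accepts M (p ++ (take i t ++ drop j t))].
Proof.
move=> Hacc Ht.
pose q0 := foldl (@dfa_trans _ M) (dfa_start M) p.
pose f (k : 'I_(size t).+1) := foldl (@dfa_trans _ M) q0 (take k t).
have /injectivePn[i [j neq_ij Efij]] : ~~ injectiveb f.
  by apply/injectiveP => /leq_card; rewrite card_ord => /(ltn_trans Ht); rewrite ltnn.
have pumped (a b : 'I_(size t).+1) : a < b -> f a = f b ->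
    exists i j, [/\ i < j, j <= size t & dfa_accepts M (p ++ (take i t ++ drop j t))].
  move=> ltab Efab; exists a, b; split=> //; first by rewrite -ltnS.
  move: Hacc; rewrite /dfa_accepts !foldl_cat -/q0 -{1}(cat_take_drop b t).
  by rewrite foldl_cat -/(f b) -Efab.
case: (ltngtP i j) => [ltij|ltji|/val_inj Eij].
- exact: pumped ltij Efij.
- by apply: pumped ltji _; rewrite Efij.
- by rewrite Eij eqxx in neq_ij.
Qed.

Section FunctionalRelations.
Variable T : finType.
Local Notation dfa2 := (dfa (option T * option T)%type).

Definition fa_recognizes (M : dfa2) (Rel : seq T -> seq T -> Prop) :=
  forall x, dfa_accepts M x <-> exists u v, x = conv u v /\ Rel u v.

Lemma conv_pump_tail (M : dfa2) (u v : seq T) :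
  dfa_accepts M (conv u v) -> size u + #|dfa_state M| < size v ->
  exists2 v', size v' < size v & dfa_accepts M (conv u v').
Proof.
(* Pump inside the tail, where only v is still read, so that the pumped word is
   again the convolution of u with a shorter word. *)
move=> Hacc Hlong; have Huv : size u <= size v by lia.
move: Hacc; rewrite conv_split //; set r := drop (size u) v.
have Hr : size r = size v - size u by rewrite size_drop.
case/dfa_pump; first by rewrite size_map; lia.
move=> i [j [ltij]]; rewrite size_map -map_take -map_drop -map_cat => le_j Hacc.
have Hpre : size (take (size u) v) = size u by rewrite size_takel.
exists (take (size u) v ++ (take i r ++ drop j r)).
  rewrite !size_cat Hpre size_take size_drop; clearbody r.
  by case: (ltnP i (size r)); lia.
by rewrite conv_split ?size_cat ?Hpre ?leq_addr // take_size_cat // drop_size_cat.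
Qed.

Lemma fa_functional_size_le M Rel : fa_recognizes M Rel ->
  (forall u v v', Rel u v -> Rel u v' -> v = v') ->
  forall u v, Rel u v -> size v <= size u + #|dfa_state M|.
Proof.
move=> HM Hfun u v Huv; rewrite leqNgt; apply/negP => Hlong.
have Hacc : dfa_accepts M (conv u v) by apply/HM; exists u, v.
have [v' lt_v'v /HM[u0 [v0 [/conv_inj[<- <-] Huv']]]] := conv_pump_tail Hacc Hlong.
by rewrite (Hfun _ _ _ Huv Huv') ltnn in lt_v'v.
Qed.

Definition dfa_swap (M : dfa2) : dfa2 :=
  DFA (dfa_start M) (@dfa_final _ M) (fun q c => dfa_trans q (pair_swap c)).

Lemma dfa_swap_accepts M x :
  dfa_accepts (dfa_swap M) x = dfa_accepts M (map (@pair_swap T) x).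
Proof.
rewrite /dfa_accepts /=; congr (dfa_final _).
by elim: x (dfa_start M) => //= c x IH q; rewrite IH.
Qed.

Lemma fa_recognizes_swap M Rel :
  fa_recognizes M Rel -> fa_recognizes (dfa_swap M) (fun u v => Rel v u).
Proof.
move=> HM x; rewrite dfa_swap_accepts HM; split=> -[a [b [Ex Hab]]]; exists b, a.
  by rewrite -(mapK (@pair_swapK T) x) Ex -conv_swap.
by rewrite Ex -conv_swap.
Qed.

Lemma fa_injective_size_le M Rel : fa_recognizes M Rel ->
  (forall u u' v, Rel u v -> Rel u' v -> u = u') ->
  forall u v, Rel u v -> size u <= size v + #|dfa_state M|.
Proof.
move=> /fa_recognizes_swap HM Hinj u v.
exact: (fa_functional_size_le HM (fun a b b' => Hinj b b' a)).
Qed.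

End FunctionalRelations.

Lemma RlebP x y : reflect (Rle x y) (Rleb x y).
Proof. by rewrite /Rleb; case: Rle_dec => H; constructor. Qed.

Lemma uniform_bound_in_seq (I : eqType) (P : I -> nat -> Prop) (s : seq I) :
  (forall i c c', c <= c' -> P i c -> P i c') ->
  (forall i, i \in s -> exists c, P i c) -> exists C, forall i, i \in s -> P i C.
Proof.
move=> Pmono; elim: s => [|i s IH] Hs; first by exists 0.
have [c Hc] := Hs i (mem_head _ _).
have [C HC] : exists C, forall j, j \in s -> P j C.
  by apply: IH => j Hj; apply: Hs; rewrite in_cons Hj orbT.
exists (maxn c C) => j; rewrite in_cons => /predU1P[->|Hj].
  exact: Pmono (leq_maxl _ _) Hc.
exact: Pmono (leq_maxr _ _) (HC j Hj).
Qed.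

Section CayleyAutomatic.
Variables (G : choiceType) (mul : G -> G -> G) (inv : G -> G) (one : G) (A : seq G).
Hypothesis HG : is_group mul inv one.
Variables (L : pred (seq (S inv A))) (psi : seq (S inv A) -> G).
Variable psiinv : G -> seq (S inv A).
Hypothesis Haut : cayley_automatic mul L psi psiinv.

Lemma cayley_automatic_psiK g : psi (psiinv g) = g.
Proof. by case: Haut => _ Hpsi _ _; case: (Hpsi g). Qed.

Lemma cayley_automatic_inj : injective psiinv.
Proof.
by move=> x y Exy; rewrite -[x]cayley_automatic_psiK Exy cayley_automatic_psiK.
Qed.

Lemma cayley_automatic_step_bound : exists C, forall a, a \in A -> forall g,
  size (psiinv (mul g a)) <= size (psiinv g) + C /\
  size (psiinv g) <= size (psiinv (mul g a)) + C.
Proof.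
case: Haut => _ _ _ Hrec.
apply: uniform_bound_in_seq => [a c c' lecc' Hc g|a /Hrec[M HM]].
  by case: (Hc g); lia.
exists #|dfa_state M| => g; split.
- apply: (fa_functional_size_le HM); last by exists g.
  by move=> u v v' [g1 [-> ->]] [g2 [/cayley_automatic_inj <- ->]].
- apply: (fa_injective_size_le HM); last by exists g.
  move=> u u' v [g1 [-> ->]] [g2 [-> /cayley_automatic_inj]].
  by move/(grp_mulIg HG) ->.
Qed.

Lemma cayley_automatic_length_linear (gen : generates mul inv one A) :
  exists2 K, 0 < K & forall g, g != one -> size (psiinv g) <= K * dA gen g.
Proof.
have [C HC] := cayley_automatic_step_bound.
have Hword (w : seq (S inv A)) :
    size (psiinv (evalw mul one w)) <= size (psiinv one) + C * size w.
  elim/last_ind: w => [|w s IH]; first by rewrite /= muln0 addn0.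
  rewrite evalw_rcons // size_rcons mulnS; set x := evalw mul one w in IH *.
  have : (val s \in A) || (val s \in map inv A) by rewrite -mem_cat; apply: valP.
  case/orP=> [Ha|/mapP[a Ha Es]]; first by have := proj1 (HC _ Ha x); lia.
  have Ex : mul (mul x (val s)) a = x.
    by case: HG => mulA _ mulVg; rewrite Es -mulA mulVg (grp_mulg1 HG).
  by have := proj2 (HC _ Ha (mul x (val s))); rewrite Ex; lia.
exists (size (psiinv one) + C).+1 => // g ng1.
have [w Hw Ew] := dA_spec gen g.
have dA_gt0 : 0 < dA gen g by rewrite lt0n; apply: contra ng1 => /eqP/dA_eq0->.
have := Hword w; rewrite Ew; nia.
Qed.

Lemma Qset_wdist_le (gen : generates mul inv one A) l1 l2 n g :
  Rlt 0 l1 -> g \in Qset gen psiinv l1 l2 n ->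
  let w := psiinv g in
  Rle (INR (wdist gen (evalw mul one w) (psi w))) ((1 + / l1) * INR (size w)).
Proof.
move=> l1_gt0; rewrite mem_filter => /andP[/andP[/RlebP Hlow _] _] /=.
have /leP/le_INR := wdist_evalw_le HG gen (psiinv g) g.
rewrite cayley_automatic_psiK addnE plus_INR => Hw.
have Hd : Rle (INR (dA gen g)) (/ l1 * INR (size (psiinv g))).
  apply: (Rmult_le_reg_l l1) => //; rewrite -Rmult_assoc Rinv_r ?Rmult_1_l //.
  exact: Rgt_not_eq.
rewrite Rmult_plus_distr_r Rmult_1_l; apply: (Rle_trans _ _ _ Hw).
exact: Rplus_le_compat_l.
Qed.

End CayleyAutomatic.

Lemma size_words_le (G : choiceType) (inv : G -> G) (A : seq G) n :
  size (words_le inv A n) <= #|S inv A|.+1 ^ n.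
Proof.
have size_eq k : size (words_eq inv A k) = #|S inv A| ^ k.
  by rewrite size_map -cardE card_tuple.
elim: n => [|n IH]; first by rewrite /words_le /= cats0 size_eq.
have -> : words_le inv A n.+1 = words_le inv A n ++ words_eq inv A n.+1.
  by rewrite /words_le -addn1 iotaD map_cat flatten_cat /= cats0.
rewrite size_cat size_eq expnS [_.+1 ^ _.+1]expnS mulSn leq_add // leq_mul //.
by case: n {IH} => // n; rewrite leq_exp2r.
Qed.

Lemma Rleb_ratio_bounds (M K d s : nat) : 0 < M -> d <= M * s -> s <= K * d ->
  Rleb (/ INR M * INR d) (INR s) && Rleb (INR s) (INR K * INR d).
Proof.
move=> M_gt0 /leP Hd /leP Hs; apply/andP; split; apply/RlebP; last first.
  by rewrite -mult_INR; apply: le_INR.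
have HM : Rlt 0 (INR M) by apply: lt_0_INR; apply/ltP.
apply: (Rmult_le_reg_l (INR M)) => //; rewrite -Rmult_assoc Rinv_r ?Rmult_1_l.
  by rewrite -mult_INR; apply: le_INR.
exact: Rgt_not_eq.
Qed.

Section Counting.
Variables (G : choiceType) (mul : G -> G -> G) (inv : G -> G) (one : G) (A : seq G).
Variables (gen : generates mul inv one A) (psiinv : G -> seq (S inv A)).
Hypothesis psiinv_inj : injective psiinv.
Local Notation ball := (ball mul inv one A).

Lemma count_short_repr M n : 0 < M ->
  count (fun g => M * size (psiinv g) < dA gen g) (ball n)
    <= #|S inv A|.+1 ^ (n.-1 %/ M).
Proof.
move=> M_gt0; rewrite -size_filter -(size_map psiinv).
apply: leq_trans (size_words_le inv A _); apply: uniq_leq_size.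
  by rewrite (map_inj_uniq psiinv_inj) filter_uniq // undup_uniq.
move=> w /mapP[g]; rewrite mem_filter mem_ball_dA => /andP[Hshort Hg] ->.
by rewrite mem_words_le leq_divRL //; lia.
Qed.

Lemma Qset_defect M K n : 0 < M ->
  (forall g, g != one -> size (psiinv g) <= K * dA gen g) ->
  size (ball n) - size (Qset gen psiinv (/ INR M) (INR K) n)
    <= 1 + #|S inv A|.+1 ^ (n.-1 %/ M).
Proof.
move=> M_gt0 Hlin; rewrite /Qset size_filter; set good := (fun g : G => _ && _).
rewrite -(count_predC good (ball n)) addKn.
set short := fun g => M * size (psiinv g) < dA gen g.
have bad_sub : subpred (predC good) (predU (pred1 one) short).
  move=> g /=; apply: contraR; rewrite negb_or -leqNgt => /andP[ng1 Hlong].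
  exact: Rleb_ratio_bounds M_gt0 Hlong (Hlin g ng1).
apply: leq_trans (sub_count bad_sub _) _.
rewrite -(leq_add2r (count (predI (pred1 one) short) (ball n))) count_predUI.
have one_le : count_mem one (ball n) <= 1.
  by rewrite count_uniq_mem ?undup_uniq ?leq_b1.
by rewrite -addnA leq_add // (leq_trans (count_short_repr n M_gt0)) ?leq_addr.
Qed.

End Counting.

Lemma INR_expn m k : INR (m ^ k) = pow (INR m) k.
Proof. by elim: k => [|k IH] //=; rewrite expnS mulnE mult_INR IH. Qed.

Section DefectRatio.
Local Open Scope R_scope.
Variables (b q : nat -> nat) (lam : R) (c N M : nat).
Hypothesis q_le_b : forall n, (q n <= b n)%N.
Hypothesis b_growth : forall n, (N <= n)%N -> lam ^ n <= INR (b n).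
Hypothesis lam_gt1 : 1 < lam.
Hypothesis M_gt0 : (0 < M)%N.
Hypothesis c_gt0 : (0 < c)%N.
Hypothesis lamM_ge : 2 * INR c <= lam ^ M.
Hypothesis defect_le : forall n, (b n - q n <= 1 + c ^ (n.-1 %/ M))%N.

Lemma defect_mul_pow2_le n : (N <= n)%N ->
  INR (b n - q n) * 2 ^ (n.-1 %/ M) <= 2 * INR (b n).
Proof.
move=> le_Nn; set K := n.-1 %/ M.
have c_ge1 : 1 <= INR c by apply: (le_INR 1); apply/leP.
have cK_ge1 : 1 <= INR c ^ K by apply: pow_R1_Rle.
have pow2_pos : 0 < 2 ^ K by apply: pow_lt; lra.
have growth : 2 ^ K * INR c ^ K <= INR (b n).
  apply: Rle_trans (b_growth le_Nn); rewrite -Rpow_mult_distr.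
  apply: Rle_trans (Rle_pow lam (M * K) n _ _); first last.
  - by apply/leP; have := leq_divM n.-1 M; rewrite -/K; lia.
  - lra.
  by rewrite pow_mult; apply: pow_incr; lra.
have defect : INR (b n - q n) <= 2 * INR c ^ K.
  have /leP/le_INR := defect_le n; rewrite addnE plus_INR INR_expn -/K /=; lra.
nra.
Qed.

Lemma Un_cv_ratio_1 : Un_cv (fun n => INR (q n) / INR (b n)) 1.
Proof.
move=> eps eps_gt0.
have [K0 HK0] : exists K0, forall K, (K >= K0)%coq_nat -> Rabs ((/ 2) ^ K) < eps / 2.
  by apply: pow_lt_1_zero; [rewrite Rabs_right; lra | lra].
exists (maxn N (K0 * M).+1) => n /leP le_n; set K := n.-1 %/ M.
have le_K0K : (K0 <= K)%N by rewrite leq_divRL //; lia.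
have pow2_pos : 0 < 2 ^ K by apply: pow_lt; lra.
have pow2_big : 2 < eps * 2 ^ K.
  have := HK0 K (@leP _ _ le_K0K).
  rewrite Rabs_right; last by apply: Rle_ge; apply: pow_le; lra.
  rewrite pow_inv => H; have := Rmult_lt_compat_r _ _ _ pow2_pos H; rewrite Rinv_l; lra.
have Hdef := defect_mul_pow2_le (leq_trans (leq_maxl _ _) le_n).
have b_pos : 0 < INR (b n).
  apply: Rlt_le_trans (b_growth (leq_trans (leq_maxl _ _) le_n)).
  by apply: pow_lt; lra.
rewrite minus_INR -/K in Hdef; last exact/leP.
have qb : INR (q n) <= INR (b n) by apply/le_INR/leP.
set r := INR (q n) / INR (b n).
have Er : INR (q n) = r * INR (b n) by rewrite /r; field; lra.
have bY_pos : 0 < INR (b n) * 2 ^ K by apply: Rmult_lt_0_compat.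
rewrite /Rdist Rabs_left1; last by nra.
apply: (Rmult_lt_reg_r _ _ _ bY_pos); nra.
Qed.

End DefectRatio.

Lemma exists_pow_ge (lam y : R) : Rlt 1 lam -> exists2 M, 0 < M & Rle y (lam ^ M).
Proof.
move=> lam_gt1.
have [M HM] : exists M, forall n, (n >= M)%coq_nat -> Rge (Rabs (lam ^ n)) y.
  by apply: Pow_x_infinity; rewrite Rabs_right; lra.
exists M.+1 => //; have := HM M.+1 (le_S _ _ (le_n _)).
by rewrite Rabs_right; [lra | apply/Rle_ge/pow_le; lra].
Qed.

Unset Implicit Arguments.
Set Strict Implicit.

Theorem mainTheorem13 (G : choiceType) (mul : G -> G -> G) (inv : G -> G) (one : G)
  (HG : is_group mul inv one) (A : seq G) (gen : generates mul inv one A)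
  (Hexp : exp_growth mul inv one A)
  (L : pred (seq (S inv A))) (psi : seq (S inv A) -> G) (psiinv : G -> seq (S inv A))
  (Haut : cayley_automatic mul L psi psiinv) :
  exists l1 l2 : R, Rlt 0 l1 /\ Rlt 0 l2 /\
    Un_cv (fun n => Rdiv (INR (size (Qset gen psiinv l1 l2 n)))
                         (INR (size (ball mul inv one A n)))) 1 /\
    (forall n g, g \in Qset gen psiinv l1 l2 n ->
       let w := psiinv g in
       Rle (INR (wdist gen (evalw mul one w) (psi w)))
           (Rmult (Rplus 1 (Rinv l1)) (INR (size w)))).
Proof.
have [K K_gt0 Hlin] := cayley_automatic_length_linear HG Haut gen.
have [lam [lam_gt1 [N Hgrowth]]] := Hexp.
have [M M_gt0 lamM] := exists_pow_ge (2 * INR #|S inv A|.+1) lam_gt1.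
have M_pos : Rlt 0 (INR M) by apply/lt_0_INR/ltP.
exists (Rinv (INR M)), (INR K); split; last split; last split.
- exact: Rinv_0_lt_compat.
- exact/lt_0_INR/ltP.
- apply: (Un_cv_ratio_1 _ Hgrowth lam_gt1 M_gt0 _ lamM) => // n.
    by rewrite /Qset size_filter count_size.
  exact (Qset_defect (cayley_automatic_inj Haut) n M_gt0 Hlin).
- by move=> n g; apply: (Qset_wdist_le HG Haut); apply: Rinv_0_lt_compat.
Qed.
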